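(* Let $m,a,b,t\in\mathbb{N}$ with $m\geq 3$, $a\geq 1$, $t\in\{2,\ldots,m-1\}$ and $(t-1)(am+1)<bm+t<t(am+1)$, let $S=\langle m,\ am+1,\ bm+t\rangle$ (a MANS-semigroup with embedding dimension $3$), $q=\left\lfloor\frac{m-1}{t}\right\rfloor$ and $r=(m-1)\bmod t$. (1) If $t$ divides $m$, then $\mathrm{PF}(S)=\{q(bm+t)+r(am+1)-m\}$. (2) If $t$ does not divide $m$, then $\mathrm{PF}(S)=\{(q-1)(bm+t)+(t-1)(am+1)-m,\ q(bm+t)+r(am+1)-m\}$.
   Context: $\mathbb{N}=\{0,1,2,\ldots\}$. $\langle A\rangle$ is the submonoid of $(\mathbb{N},+)$ generated by $A$; a numerical semigroup is a submonoid of $\mathbb{N}$ with finite complement. A pseudo-Frobenius number of $S$ is an $x\in\mathbb{Z}\setminus S$ with $x+s\in S$ for all $s\in S\setminus\{0\}$; $\mathrm{PF}(S)$ is the set of them. A MANS-semigroup is a numerical semigroup with $w(1)<\cdots<w(\mathrm{m}(S)-1)$, where $\mathrm{m}(S)$ is the least element of $S\setminus\{0\}$ and $w(i)$ the least element of $S$ congruent to $i$ modulo $\mathrm{m}(S)$. $a\bmod b$ is the remainder of the division of $a$ by $b$. *)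

From mathcomp Require Import all_boot all_order all_algebra.
Set Implicit Arguments. Unset Strict Implicit. Unset Printing Implicit Defensive.
Import Order.TTheory GRing.Theory Num.Theory.
Local Open Scope ring_scope.

Inductive gen_monoid (A : nat -> Prop) : nat -> Prop :=
  | gen_monoid0 : gen_monoid A 0
  | gen_monoidD (a x : nat) : A a -> gen_monoid A x -> gen_monoid A (a + x).

Definition inZ (S : nat -> Prop) (x : int) : Prop := exists n : nat, x = n%:Z /\ S n.

Definition PF (S : nat -> Prop) (x : int) : Prop :=
  ~ inZ S x /\ (forall s : nat, S s -> s <> 0%N -> inZ S (x + s%:Z)%R).

Definition gens3 (g1 g2 g3 : nat) : nat -> Prop :=
  fun n => n = g1 \/ n = g2 \/ n = g3.

From mathcomp Require Import all_boot all_algebra zify.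
Import GRing.Theory.

(* Write g = am+1, h = bm+t and d = ta-b.  The two inequalities on bm+t say
   exactly that 1 <= d <= a, and then tg = h + dm.  The Apéry set of S with
   respect to m is w(i) = (i div t) h + (i mod t) g, 0 <= i < m: from
   w(n) = ng - (n div t) dm one reads off that w(i) + g and w(i) + h never lie
   below the Apéry element of their residue class.  The pseudo-Frobenius numbers
   are the w(i) - m such that neither w(i) + g nor w(i) + h is an Apéry element.
   Now w(i) + g is one unless i+1 = m or t | i+1, and w(i) + h is one unless
   i + t >= m; the only such i are m-1 and, when t does not divide m,
   ((m-1) div t) t - 1. *)

Lemma gen_monoid_add A x y :
  gen_monoid A x -> gen_monoid A y -> gen_monoid A (x + y).
Proof.
elim=> [|c z Ac _ IH] Ay; first by rewrite add0n.
by rewrite -addnA; apply: gen_monoidD => //; apply: IH.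
Qed.

Lemma gen_monoid_mul A c n : A c -> gen_monoid A (n * c).
Proof.
move=> Ac; elim: n => [|n IH]; first exact: gen_monoid0.
by rewrite mulSn; apply: gen_monoidD.
Qed.

Lemma gen_monoid_gen A c : A c -> gen_monoid A c.
Proof. by move=> Ac; rewrite -[c]mul1n; apply: gen_monoid_mul. Qed.

Lemma PF_gen_monoid A (x : int) :
  PF (gen_monoid A) x <->
  ~ inZ (gen_monoid A) x /\
  (forall c, A c -> c <> 0 -> inZ (gen_monoid A) (x + c%:Z)%R).
Proof.
split=> [[xS xsS] | [xS xcS]]; split=> //.
  by move=> c Ac c0; apply: xsS => //; apply: gen_monoid_gen.
move=> s; elim=> [//|c s' Ac S's IH] s0.
case: c Ac s0 => [_ s0|c Ac _]; first exact: IH.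
have [n [xcn Sn]] : inZ (gen_monoid A) (x + c.+1%:Z)%R by apply: xcS.
by exists (n + s'); split; [rewrite !PoszD addrA xcn | exact: gen_monoid_add].
Qed.

Section ApérySet.

Context {A : nat -> Prop} {m : nat} {w : nat -> nat}.
Let S := gen_monoid A.

Hypothesis m_gt0 : 0 < m.
Hypothesis A_m : A m.
Hypothesis w0 : w 0 = 0.
Hypothesis w_mod : forall i, i < m -> w i %% m = i.
Hypothesis w_mem : forall i, i < m -> S (w i).
Hypothesis w_add_gen : forall c i, A c -> i < m -> w ((i + c) %% m) <= w i + c.

Lemma apery_dvd n : m %| n - w (n %% m).
Proof.
have [wn|nw] := leqP (w (n %% m)) n; last by rewrite (eqnP (ltnW nw)) dvdn0.
by rewrite -eqn_mod_dvd // w_mod // ltn_pmod.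
Qed.

Lemma apery_mem n : S n <-> w (n %% m) <= n.
Proof.
split=> [|wn].
  elim=> [|c x Ac _ IH]; first by rewrite mod0n w0.
  rewrite -modnDmr addnC.
  by have := w_add_gen _ _ Ac (ltn_pmod x m_gt0); lia.
have /dvdnP[k nk] := apery_dvd n.
have -> : n = k * m + w (n %% m) by rewrite -nk subnK.
by apply: gen_monoid_add; [apply: gen_monoid_mul | apply/w_mem/ltn_pmod].
Qed.

Lemma inZ_subm n : inZ S (n%:Z - m%:Z)%R <-> S n /\ n <> w (n %% m).
Proof.
rewrite apery_mem; split=> [[k [nk /apery_mem Sk]] | [wn nw]].
  have -> : n = k + m by lia.
  by rewrite modnDr; lia.
have mn : m <= n - w (n %% m) by apply: dvdn_leq (apery_dvd n); lia.
exists (n - m); split; first by rewrite subzn //; lia.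
by apply/apery_mem; rewrite -(modnDr (n - m)) subnK; lia.
Qed.

Lemma PF_apery (x : int) :
  PF S x <-> exists2 i, i < m &
    x = ((w i)%:Z - m%:Z)%R /\
    (forall c, A c -> c <> 0 -> w i + c <> w ((i + c) %% m)).
Proof.
have subDm (n c : nat) : (n%:Z - m%:Z + c%:Z = (n + c)%:Z - m%:Z)%R.
  by rewrite PoszD addrAC.
rewrite PF_gen_monoid; split=> [[xS xcS] | [i im [-> wc]]].
  have [n [xmn Sn]] : inZ S (x + m%:Z)%R by apply: (xcS _ A_m); lia.
  have xE : x = (n%:Z - m%:Z)%R by rewrite -xmn addrK.
  rewrite {x xmn}xE in xS xcS *.
  have nw : n = w (n %% m).
    have [//|/eqP nw] := eqVneq n (w (n %% m)).
    by case: xS; apply/(inZ_subm n).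
  exists (n %% m); first exact: ltn_pmod.
  split=> [|c Ac c0]; first by rewrite -nw.
  have := xcS c Ac c0; rewrite subDm => /inZ_subm[_].
  by rewrite -nw modnDml.
split=> [/inZ_subm[_]|c Ac c0]; first by rewrite w_mod.
rewrite subDm; apply/inZ_subm; split.
  by apply: gen_monoid_add; [exact: w_mem | exact: gen_monoid_gen].
by rewrite -modnDml w_mod //; apply: wc.
Qed.

End ApérySet.

Definition apery3 (t g h n : nat) := n %/ t * h + n %% t * g.

Lemma apery3_0 t g h : apery3 t g h 0 = 0.
Proof. by rewrite /apery3 div0n mod0n. Qed.

Lemma apery3E t g h d m n :
  t * g = h + d * m -> apery3 t g h n + n %/ t * d * m = n * g.
Proof.
move=> tg; rewrite /apery3 {4}(divn_eq n t) mulnDl.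
by rewrite -[n %/ t * t * g]mulnA tg mulnDr mulnA addnAC.
Qed.

Lemma apery3_predM t g h q :
  0 < t -> 0 < q -> apery3 t g h (q * t).-1 = q.-1 * h + t.-1 * g.
Proof.
move=> t0 q0; have -> : (q * t).-1 = q.-1 * t + t.-1.
  by rewrite -[in LHS](prednK q0) mulSn addnC -subn1 -addnBA // subn1.
have t1t : t.-1 < t by rewrite ltn_predL.
by rewrite /apery3 divnMDl // modnMDl divn_small // modn_small // addn0.
Qed.

Lemma top_window_dvdS m t i : 0 < t -> t < m -> i < m ->
  (i.+1 = m \/ t %| i.+1) /\ m <= i + t <->
  i = m.-1 \/ ~~ (t %| m) /\ i = ((m - 1) %/ t * t).-1.
Proof.
move=> t_gt0 tm im; have mq := divn_eq (m - 1) t; have rt := ltn_pmod (m - 1) t_gt0.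
set q := (m - 1) %/ t in mq *; set r := (m - 1) %% t in mq rt.
split=> [[[iSm | /dvdnP[k iSk]] mit] | [-> | [mt ->]]].
- by left; rewrite -iSm.
- have [iSm | iSm] := eqVneq i.+1 m; first by left; rewrite -iSm.
  have kq : k = q.
    apply/eqP; rewrite eqn_leq -[k <= q]ltnS -[q <= k]ltnS.
    by rewrite -[k < _](ltn_pmul2r t_gt0) -[q < _](ltn_pmul2r t_gt0) !mulSn; lia.
  right; split; last by rewrite -kq -iSk.
  apply/dvdnP=> [[l ml]].
  have kl : k < l by rewrite -(ltn_pmul2r t_gt0); lia.
  have lk : l < k.+1 by rewrite -(ltn_pmul2r t_gt0) mulSn; lia.
  lia.
- by split; [left; lia | lia].
- have rt1 : r.+1 < t.
    rewrite ltn_neqAle rt andbT; apply: contra mt => /eqP rt1.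
    by apply/dvdnP; exists q.+1; rewrite mulSn; lia.
  have qt_gt0 : 0 < q * t.
    rewrite muln_gt0 t_gt0 andbT lt0n; apply/eqP=> q0; rewrite q0 in mq; lia.
  by rewrite prednK //; split; [right; exact: dvdn_mull | lia].
Qed.

Section MANS.

Variables m a b t : nat.
Hypotheses (m_ge3 : 3 <= m) (t_ge2 : 2 <= t) (t_le_m1 : t <= m - 1).
Hypotheses (t_lb : (t - 1) * (a * m + 1) < b * m + t)
           (t_ub : b * m + t < t * (a * m + 1)).

Local Notation g := (a * m + 1).
Local Notation h := (b * m + t).
Local Notation d := (t * a - b).
Local Notation w := (apery3 t g h).

Lemma mans_defect : [/\ 0 < d, d <= a & t * g = h + d * m].
Proof.
have b_lt : b < t * a by nia.
have b_ge : (t - 1) * a <= b by nia.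
split; [lia | rewrite mulnBl mul1n in b_ge; lia | rewrite mulnBl; nia].
Qed.

Lemma apery3_mod n : w n %% m = n %% m.
Proof.
rewrite /apery3 {3}(divn_eq n t).
have -> : n %/ t * h + n %% t * g = (n %/ t * b + n %% t * a) * m + (n %/ t * t + n %% t).
  by lia.
by rewrite modnMDl.
Qed.

Lemma apery3_mansE n : w n + n %/ t * d * m = n * g.
Proof. by case: mans_defect => _ _; apply: apery3E. Qed.

Lemma apery3_addg i : i < m ->
  w ((i + g) %% m) <= w i + g /\
  (w i + g <> w ((i + g) %% m) <-> i.+1 = m \/ t %| i.+1).
Proof.
move=> im; have [d_gt0 _ _] := mans_defect.
rewrite addnCA modnMDl [i + 1]addn1.
have [iSm|mSi|->] := ltngtP i.+1 m; last 2 first.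
- lia.
- rewrite modnn apery3_0; split=> //.
  by split=> _; [left | rewrite addn1 addnS].
rewrite modn_small //.
have := apery3_mansE i.+1; rewrite divnS; last lia.
have := apery3_mansE i; case: (t %| i.+1) => /= wi wiS.
  by split; [lia | split=> [_|_]; [right | nia]].
by split; [lia | split=> [|[|]]; lia].
Qed.

Lemma apery3_addh i : i < m ->
  w ((i + h) %% m) <= w i + h /\
  (w i + h <> w ((i + h) %% m) <-> m <= i + t).
Proof.
move=> im; have [d_gt0 d_le_a tg] := mans_defect.
rewrite addnCA modnMDl.
have wit : w (i + t) = w i + h.
  have := apery3_mansE i; have := apery3_mansE (i + t).
  rewrite divnDr ?dvdnn // divnn (ltnW t_ge2) !mulnDl tg; lia.
have [itm|mit] := ltnP (i + t) m.
  by rewrite modn_small // wit; split=> //; split=> //; lia.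
have -> : (i + t) %% m = i + t - m.
  by rewrite -[in LHS](subnK mit) modnDr modn_small //; lia.
have kdm : i %/ t * d * m + d * m < m * g.
  rewrite -mulnDl [_ + d]addnC -mulSn [X in X < _]mulnC ltn_pmul2l; last lia.
  rewrite addn1 ltnS [a * m]mulnC.
  exact: leq_mul (leq_ltn_trans (leq_div i t) im) d_le_a.
have wj := apery3_mansE (i + t - m); rewrite divn_small ?mul0n in wj; last lia.
have := apery3_mansE (i + t).
rewrite divnDr ?dvdnn // divnn (ltnW t_ge2) mulnDl wit -[in RHS](subnK mit) mulnDl.
by split; [lia | split=> _; lia].
Qed.

Local Notation S := (gen_monoid (gens3 m g h)).

Let m_gt0 : 0 < m. Proof. lia. Qed.
Let t_gt0 : 0 < t. Proof. lia. Qed.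
Let t_lt_m : t < m. Proof. lia. Qed.

Lemma apery3_mod_small i : i < m -> w i %% m = i.
Proof. by move=> im; rewrite apery3_mod modn_small. Qed.

Lemma apery3_in i : S (w i).
Proof.
by apply: gen_monoid_add; apply: gen_monoid_mul; [right; right | right; left].
Qed.

Lemma apery3_add_gens c i : gens3 m g h c -> i < m -> w ((i + c) %% m) <= w i + c.
Proof.
move=> [->|[->|->]] im; last by case: (apery3_addh i im).
  by rewrite modnDr modn_small // leq_addr.
by case: (apery3_addg i im).
Qed.

Lemma PF_mans_index i : i < m ->
  (forall c, gens3 m g h c -> c <> 0 -> w i + c <> w ((i + c) %% m)) <->
  (i.+1 = m \/ t %| i.+1) /\ m <= i + t.
Proof.
move=> im; have [_ gP] := apery3_addg i im; have [_ hP] := apery3_addh i im.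
split=> [PFi | [gi hi] c [->|[->|->]] _].
- split; first by apply/gP; apply: PFi; [right; left | lia].
  by apply/hP; apply: PFi; [right; right | lia].
- by rewrite modnDr modn_small //; lia.
- exact/gP.
- exact/hP.
Qed.

Lemma PF_mans x :
  PF S x <->
  x = ((w m.-1)%:Z - m%:Z)%R \/
  ~~ (t %| m) /\ x = ((w ((m - 1) %/ t * t).-1)%:Z - m%:Z)%R.
Proof.
have PFi i := PF_mans_index i; have win i := top_window_dvdS m t i t_gt0 t_lt_m.
rewrite (PF_apery m_gt0 (or_introl erefl) (apery3_0 _ _ _) apery3_mod_small
                  (fun i _ => apery3_in i) apery3_add_gens).
split=> [[i im [-> /(PFi i im)/(win i im)]] | xP].
  by case=> [-> | [tm ->]]; [left | right].
case: xP => [-> | [tm ->]]; [set j := m.-1 | set j := ((m - 1) %/ t * t).-1].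
- have jm : j < m by rewrite /j; lia.
  by exists j => //; split=> //; apply/(PFi j jm)/(win j jm); left.
- have jm : j < m by have := leq_divM (m - 1) t; rewrite /j; lia.
  by exists j => //; split=> //; apply/(PFi j jm)/(win j jm); right.
Qed.

End MANS.

Local Open Scope ring_scope.

Theorem proposition3p22 (m a b t : nat) :
  (3 <= m)%N -> (1 <= a)%N -> (2 <= t)%N -> (t <= m - 1)%N ->
  ((t - 1) * (a * m + 1) < b * m + t)%N ->
  (b * m + t < t * (a * m + 1))%N ->
  let S := gen_monoid (gens3 m (a * m + 1) (b * m + t)) in
  let q := ((m - 1) %/ t)%N in
  let r := ((m - 1) %% t)%N in
  ((t %| m)%N ->
     forall x : int, PF S x <->
       x = (q%:Z * (b * m + t)%:Z + r%:Z * (a * m + 1)%:Z - m%:Z)%R) /\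
  (~~ (t %| m)%N ->
     forall x : int, PF S x <->
       (x = ((q%:Z - 1) * (b * m + t)%:Z + (t%:Z - 1) * (a * m + 1)%:Z - m%:Z)%R
        \/ x = (q%:Z * (b * m + t)%:Z + r%:Z * (a * m + 1)%:Z - m%:Z)%R)).
Proof.
(* 1 <= a is implied by t_lb and t_ub, which force 1 <= ta - b <= a. *)
move=> m_ge3 _ t_ge2 t_le_m1 t_lb t_ub S q r.
have PFE := PF_mans m a b t m_ge3 t_ge2 t_le_m1 t_lb t_ub.
have q_gt0 : (0 < q)%N by rewrite divn_gt0; lia.
have wm1 : (apery3 t (a * m + 1) (b * m + t) m.-1)%:Z
           = q%:Z * (b * m + t)%:Z + r%:Z * (a * m + 1)%:Z.
  by rewrite -subn1 /apery3 PoszD !PoszM.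
have wqt : (apery3 t (a * m + 1) (b * m + t) (q * t).-1)%:Z
           = (q%:Z - 1) * (b * m + t)%:Z + (t%:Z - 1) * (a * m + 1)%:Z.
  by rewrite apery3_predM ?PoszD ?PoszM ?predn_int //; lia.
split=> [tm | tm] x; rewrite PFE wm1 wqt tm.
  by split=> [[|[]]|->]; [|done|left].
by split=> [[|[_]]|[]] ->; [right | left | right; split | left].
Qed.
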